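(* Assume Assumptions A, B, C hold, let $w^{(t)}$ be generated by Algorithm 1 with $\eta^{(t)}=D\sqrt{\varepsilon}$ ($D>0$), and suppose $\alpha_i^{(t)}\le\alpha/L_\phi$ for some $\alpha\in(0,\tfrac13)$. Then for all $i\in[n]$ and $0\le t<T$, $$\|h(w^{(t+1)};i)-h_i^*\|^2\le(1+\varepsilon)\|h(w^{(t)};i)-h_i^*\|^2-2(1-3\alpha)\alpha_i^{(t)}\big[\phi_i(h(w^{(t)};i))-\phi_i(h_i^* )\big]+\frac{3\varepsilon+2}{4}c\big(4+(V+2)GD^2\big)^2\varepsilon+\frac{3\varepsilon+2}{\varepsilon}\big\|\eta^{(t)}H_i^{(t)}v_{*\mathrm{reg}}^{(t)}-\alpha_i^{(t)}\nabla\phi_i(h(w^{(t)};i))\big\|^2.$$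
   Context: Let $n,c,d$ be positive integers and $[n]=\{1,\dots,n\}$. For each $i\in[n]$ let $h(\cdot;i):\mathbb{R}^d\to\mathbb{R}^c$ (components $h_j(\cdot;i)$) and $\phi_i:\mathbb{R}^c\to\mathbb{R}$. Each $\phi_i$ attains its minimum at $h_i^*$. Norms: Euclidean for vectors, operator for matrices. Assumption A: each $\phi_i$ is convex, bounded below, and $L_\phi$-smooth. Assumption B: each $h(\cdot;i)$ is twice continuously differentiable and there is $G>0$ with $\|\nabla_w^2 h_j(w;i)\|\le G$ for all $w,i,j$. Iteration setup: given $\varepsilon>0$, $\eta^{(t)}>0$, $\alpha_i^{(t)}>0$ and iterates $w^{(t)}$, let $H_i^{(t)}$ be the Jacobian of $h(\cdot;i)$ at $w^{(t)}$, $\Phi^{(t)}(v)=\frac{1}{2n}\sum_{i=1}^n\|\eta^{(t)}H_i^{(t)}v-\alpha_i^{(t)}\nabla\phi_i(h(w^{(t)};i))\|^2$, $\Psi^{(t)}(v)=\Phi^{(t)}(v)+\frac{\varepsilon^2}{2}\|v\|^2$, $v_{*\mathrm{reg}}^{(t)}$ its unique minimizer. Algorithm 1: $w^{(0)}$ arbitrary, $w^{(t+1)}=w^{(t)}-\eta^{(t)}v_{*\mathrm{reg}}^{(t)}$, $t=0,\dots,T-1$. Assumption C (constant $V>0$): for each $0\le t<T$ there is $\hat v^{(t)}$ with $\|\hat v^{(t)}\|^2\le V$ and $\Phi^{(t)}(\hat v^{(t)})\le\varepsilon^2$. *)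

From HB Require Import structures.
From mathcomp Require Import all_boot all_order all_algebra.
From mathcomp Require Import all_classical all_reals all_analysis.
Set Implicit Arguments. Unset Strict Implicit. Unset Printing Implicit Defensive.
Import Order.TTheory GRing.Theory Num.Theory.
Import numFieldNormedType.Exports.
Local Open Scope ring_scope.

Section Defs.
Variable R : realType.

Definition sqnorm {k : nat} (v : 'cV[R]_k) : R := \sum_(j < k) (v j 0) ^+ 2.
Definition enorm {k : nat} (v : 'cV[R]_k) : R := Num.sqrt (sqnorm v).

Definition ebase {k : nat} (j : 'I_k) : 'cV[R]_k := delta_mx j 0.

Definition coordf {d c : nat} (f : 'cV[R]_d -> 'cV[R]_c) (j : 'I_c) : 'cV[R]_d -> R :=
  fun w => f w j 0.

Definition gradv {k : nat} (f : 'cV[R]_k -> R) (x : 'cV[R]_k) : 'cV[R]_k :=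
  \col_(j < k) ('D_(ebase j) f x).

Definition jacmx {d c : nat} (f : 'cV[R]_d -> 'cV[R]_c) (w : 'cV[R]_d) : 'M[R]_(c, d) :=
  \matrix_(j < c, k < d) ('D_(ebase k) (coordf f j) w).

Definition hessmx {d : nat} (g : 'cV[R]_d -> R) (w : 'cV[R]_d) : 'M[R]_d :=
  \matrix_(k < d, l < d) ('D_(ebase l) (fun x => 'D_(ebase k) g x) w).

Definition opnorm_le {k : nat} (A : 'M[R]_k) (G : R) : Prop :=
  forall u : 'cV[R]_k, enorm (A *m u) <= G * enorm u.

Definition convex_fun {k : nat} (f : 'cV[R]_k -> R) : Prop :=
  forall (x y : 'cV[R]_k) (s : R), 0 <= s <= 1 ->
    f (s *: x + (1 - s) *: y) <= s * f x + (1 - s) * f y.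

Definition bounded_below {k : nat} (f : 'cV[R]_k -> R) : Prop :=
  exists m : R, forall x, m <= f x.

Definition L_smooth {k : nat} (L : R) (f : 'cV[R]_k -> R) : Prop :=
  (forall x, differentiable f x) /\
  forall x y, enorm (gradv f x - gradv f y) <= L * enorm (x - y).

Definition C2 {d : nat} (g : 'cV[R]_d -> R) : Prop :=
  (forall w, differentiable g w) /\
  (forall k : 'I_d, forall w, differentiable (fun x => 'D_(ebase k) g x) w) /\
  (forall k l : 'I_d, continuous (fun w => 'D_(ebase l) (fun x => 'D_(ebase k) g x) w)).

(* Phi^{(t)}(v) with data eta, alpha_i, H_i, g_i = gradv phi_i(h(w;i)) *)
Definition Phi {n d c : nat} (eta : R) (alpha : 'I_n -> R)
  (H : 'I_n -> 'M[R]_(c, d)) (g : 'I_n -> 'cV[R]_c) (v : 'cV[R]_d) : R :=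
  (2 * n%:R)^-1 * \sum_(i < n) sqnorm (eta *: (H i *m v) - alpha i *: g i).

Definition Psi {n d c : nat} (eps eta : R) (alpha : 'I_n -> R)
  (H : 'I_n -> 'M[R]_(c, d)) (g : 'I_n -> 'cV[R]_c) (v : 'cV[R]_d) : R :=
  Phi eta alpha H g v + eps ^+ 2 / 2 * sqnorm v.

End Defs.

From HB Require Import structures.
From mathcomp Require Import all_boot all_order all_algebra.
From mathcomp Require Import all_classical all_reals all_analysis.
From mathcomp Require Import ring lra.
Import Order.TTheory GRing.Theory Num.Theory.
Import numFieldNormedType.Exports.
Local Open Scope ring_scope.

(* Write x = h(w^(t); i), g = grad phi_i(x), e = eta H_i v - alpha_i g (the residual of the
   regularized least-squares step) and r = h(w^(t+1); i) - x + eta H_i v (the second-order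
   Taylor remainder of h along the step).  Then h(w^(t+1); i) - hstar_i = (x - hstar_i - alpha_i g)
   - e + r, and Young's inequality bounds its squared norm by
   (1 + eps)|x - hstar_i|^2 - 2 alpha_i <x - hstar_i, g> + 3 alpha_i^2 |g|^2
   + (3 eps + 2)/eps (|e|^2 + |r|^2).
   Convexity gives <x - hstar_i, g> >= phi_i(x) - phi_i(hstar_i), smoothness gives
   |g|^2 <= 2 L (phi_i(x) - phi_i(hstar_i)), and the Hessian bound gives |r_j| <= G eta^2 |v|^2 / 2,
   where |v|^2 <= V + 2 because Psi(v) <= Psi(v_hat) <= eps^2 (1 + V/2). *)

Section OneStepBound.
Local Set Implicit Arguments.
Local Unset Strict Implicit.
Local Unset Printing Implicit Defensive.
Local Open Scope classical_set_scope.
Variable R : realType.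

Definition dotv {k : nat} (p q : 'cV[R]_k) : R := \sum_(j < k) p j 0 * q j 0.

Lemma dotvB k (p q r : 'cV[R]_k) : dotv p (q - r) = dotv p q - dotv p r.
Proof. by rewrite /dotv -sumrB; apply: eq_bigr => j _; rewrite !mxE mulrBr. Qed.

Lemma dotvNl k (p q : 'cV[R]_k) : dotv (- p) q = - dotv p q.
Proof. by rewrite /dotv -sumrN; apply: eq_bigr => j _; rewrite !mxE mulNr. Qed.

Lemma sqnorm_ge0 k (v : 'cV[R]_k) : 0 <= sqnorm v.
Proof. by apply: sumr_ge0 => j _; rewrite sqr_ge0. Qed.

Lemma sqnorm_dotv k (v : 'cV[R]_k) : sqnorm v = dotv v v.
Proof. by apply: eq_bigr => j _; rewrite expr2. Qed.

Lemma sqnormN k (v : 'cV[R]_k) : sqnorm (- v) = sqnorm v.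
Proof. by apply: eq_bigr => j _; rewrite mxE sqrrN. Qed.

Lemma sqnormZ k (a : R) (v : 'cV[R]_k) : sqnorm (a *: v) = a ^+ 2 * sqnorm v.
Proof. by rewrite /sqnorm mulr_sumr; apply: eq_bigr => j _; rewrite !mxE exprMn. Qed.

Lemma sqnormZB k (a : R) (p q : 'cV[R]_k) :
  sqnorm (a *: p - q) = a ^+ 2 * sqnorm p - 2 * a * dotv p q + sqnorm q.
Proof.
rewrite /sqnorm /dotv !mulr_sumr -sumrB -big_split /=.
by apply: eq_bigr => j _; rewrite !mxE; ring.
Qed.

Lemma sqnorm_eq0 k (v : 'cV[R]_k) : sqnorm v = 0 -> forall j, v j 0 = 0.
Proof.
move/eqP; rewrite psumr_eq0 /= => [/allP v0 j|j _]; last exact: sqr_ge0.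
by apply/eqP; rewrite -sqrf_eq0; apply: v0; exact: mem_index_enum.
Qed.

Lemma enorm_sqr k (v : 'cV[R]_k) : enorm v ^+ 2 = sqnorm v.
Proof. by rewrite /enorm sqr_sqrtr // sqnorm_ge0. Qed.

Lemma enormZ k (a : R) (v : 'cV[R]_k) : 0 <= a -> enorm (a *: v) = a * enorm v.
Proof. by move=> a0; rewrite /enorm sqnormZ sqrtrM ?sqr_ge0 // sqrtr_sqr ger0_norm. Qed.

(* Cauchy--Schwarz: the quadratic [sqnorm (s *: p - q)] is nonnegative at its minimum. *)
Lemma dotv_le_enormM k (p q : 'cV[R]_k) : dotv p q <= enorm p * enorm q.
Proof.
have [p0|p_neq0] := eqVneq (sqnorm p) 0.
  rewrite /dotv big1 ?mulr_ge0 ?sqrtr_ge0 // => j _.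
  by rewrite (sqnorm_eq0 p0) mul0r.
have p_gt0 : 0 < sqnorm p by rewrite lt_def p_neq0 sqnorm_ge0.
have dot2_le : dotv p q ^+ 2 <= sqnorm p * sqnorm q.
  rewrite -subr_ge0.
  have -> : sqnorm p * sqnorm q - dotv p q ^+ 2
      = sqnorm ((dotv p q / sqnorm p) *: p - q) * sqnorm p.
    by rewrite sqnormZB; field; rewrite gt_eqF.
  by rewrite mulr_ge0 ?sqnorm_ge0.
rewrite /enorm -sqrtrM ?sqnorm_ge0 //; apply: le_trans (ler_norm _) _.
by rewrite -sqrtr_sqr ler_sqrt // mulr_ge0 ?sqnorm_ge0.
Qed.

Lemma normr_dotv_le k (p q : 'cV[R]_k) : `|dotv p q| <= enorm p * enorm q.
Proof.
rewrite ler_norml dotv_le_enormM andbT lerNl -dotvNl.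
by rewrite [enorm p]/enorm -sqnormN; exact: dotv_le_enormM.
Qed.

Lemma cV_sum_ebase k (v : 'cV[R]_k) : v = \sum_(j < k) v j 0 *: ebase R j.
Proof.
apply/matrixP => i l; rewrite summxE (bigD1 i) //= big1 => [|j ji].
  by rewrite !mxE ord1 !eqxx mulr1 addr0.
by rewrite !mxE eq_sym (negbTE ji) mulr0.
Qed.

Lemma derive_dotv_gradv k (f : 'cV[R]_k -> R) x u : differentiable f x ->
  'D_u f x = dotv u (gradv f x).
Proof.
move=> df; rewrite deriveE // [in LHS](cV_sum_ebase u) linear_sum.
by apply: eq_bigr => j _; rewrite linearZ /= -deriveE // mxE.
Qed.

Lemma is_derive_line k (f : 'cV[R]_k -> R) x u s : derivable f (x + s *: u) u ->
  is_derive s 1 (fun r : R => f (x + r *: u)) ('D_u f (x + s *: u)).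
Proof.
move=> df.
have shiftE : (fun r : R => r^-1 *: (((fun r => f (x + r *: u)) \o shift s) (r *: 1)
      - f (x + s *: u)))
    = (fun r : R => r^-1 *: ((f \o shift (x + s *: u)) (r *: u) - f (x + s *: u))).
  apply/funext => r /=; congr (_ *: (f _ - _)).
  by rewrite [r *: 1]mulr1 scalerDl addrCA addrC.
by apply: DeriveDef; [rewrite /derivable shiftE | rewrite /derive shiftE].
Qed.

Lemma is_derive_line_dotv_gradv k (f : 'cV[R]_k -> R) x u s :
  (forall l : 'I_k, differentiable (fun y => 'D_(ebase R l) f y) (x + s *: u)) ->
  is_derive s 1 (fun r : R => dotv u (gradv f (x + r *: u)))
    (dotv u (hessmx f (x + s *: u) *m u)).
Proof.
move=> dD.
have gradE r : dotv u (gradv f (x + r *: u))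
    = (\sum_(l < k) u l 0 \*: (fun r => 'D_(ebase R l) f (x + r *: u))) r.
  by rewrite fct_sumE; apply: eq_bigr => l _; rewrite mxE.
have dl l : is_derive s 1 (u l 0 \*: (fun r => 'D_(ebase R l) f (x + r *: u)))
    (u l 0 *: 'D_u (fun y => 'D_(ebase R l) f y) (x + s *: u)).
  by apply: is_deriveZ; apply: is_derive_line; exact: diff_derivable.
rewrite (funext gradE); apply: is_derive_eq (is_derive_sum dl) _.
apply: eq_bigr => l _; rewrite derive_dotv_gradv //= [(_ *m u) l 0]mxE.
rewrite -[_ *: _]/(_ * _); congr (_ * _); apply: eq_bigr => m _.
by rewrite !mxE mulrC.
Qed.

Lemma hessmx_quadform_le k (f : 'cV[R]_k -> R) G x u : opnorm_le (hessmx f x) G ->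
  `|dotv u (hessmx f x *m u)| <= G * sqnorm u.
Proof.
move=> hG; apply: le_trans (normr_dotv_le _ _) _.
rewrite -enorm_sqr expr2 mulrCA ler_wpM2l ?sqrtr_ge0 //; exact: hG.
Qed.

Lemma is_derive_affine_sqr (a b s : R) :
  is_derive s 1 (fun r : R => a * r + b * (r * r)) (a + 2 * b * s).
Proof.
have -> : (fun r : R => a * r + b * (r * r)) = a \*: (@id R^o) + b \*: (@id R^o * @id R^o).
  by apply/funext.
by apply: is_derive_eq; rewrite /= !scaler1 /GRing.scale /=; ring.
Qed.

Lemma nonpos_derive_le (f df : R -> R) (a b : R) : a <= b ->
  (forall x : R, is_derive x 1 f (df x)) -> (forall x, a < x < b -> df x <= 0) -> f b <= f a.
Proof.
move=> ab fd df_le0; case: (ltgtP a b) ab => // [altb|->] _; last by [].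
have [c cab fbaE] := MVT altb (fun x _ => fd x)
  (derivable_within_continuous (fun x _ => @ex_derive _ _ _ _ _ _ _ (fd x))).
have : df c <= 0 by apply: df_le0; move: cab; rewrite in_itv.
nra.
Qed.

Lemma taylor2_le (g g1 g2 : R -> R) (M : R) :
  (forall s : R, is_derive s 1 g (g1 s)) -> (forall s : R, is_derive s 1 g1 (g2 s)) ->
  (forall s, g2 s <= M) -> g 1 - g 0 - g1 0 <= M / 2.
Proof.
move=> dg dg1 g2M.
have g1_le s : 0 <= s -> g1 s - M * s <= g1 0.
  move=> s0; have dle r : 0 < r < s -> g2 r + (- M + 2 * 0 * r) <= 0.
    by move=> _; have := g2M r; lra.
  have := nonpos_derive_le s0 (fun r =>
    is_deriveD (dg1 r) (is_derive_affine_sqr (- M) 0 r)) dle.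
  by rewrite !addrfctE /=; lra.
have dle r : 0 < r < 1 -> g1 r + (- g1 0 + 2 * - (M / 2) * r) <= 0.
  by case/andP=> r0 _; have := g1_le r (ltW r0); lra.
have := nonpos_derive_le ler01 (fun r =>
  is_deriveD (dg r) (is_derive_affine_sqr (- g1 0) (- (M / 2)) r)) dle.
by rewrite !addrfctE /=; lra.
Qed.

Lemma taylor2_sqr_le (g g1 g2 : R -> R) (M : R) :
  (forall s : R, is_derive s 1 g (g1 s)) -> (forall s : R, is_derive s 1 g1 (g2 s)) ->
  (forall s, `|g2 s| <= M) -> (g 1 - g 0 - g1 0) ^+ 2 <= (M / 2) ^+ 2.
Proof.
move=> dg dg1 g2M.
have up := taylor2_le dg dg1 (fun s => le_trans (ler_norm _) (g2M s)).
have g2M' s : - g2 s <= M by apply: le_trans (g2M s); rewrite -normrN ler_norm.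
have low := @taylor2_le (- g) (- g1) (- g2) M
  (fun s => is_deriveN (dg s)) (fun s => is_deriveN (dg1 s)) g2M'.
have M0 : 0 <= M := le_trans (normr_ge0 _) (g2M 0).
rewrite !opprfctE /= in low; nra.
Qed.

Lemma C2_taylor_sqr_le k (f : 'cV[R]_k -> R) (G : R) w u :
  C2 f -> (forall x, opnorm_le (hessmx f x) G) ->
  (f (w + u) - f w - dotv u (gradv f w)) ^+ 2 <= (G * sqnorm u / 2) ^+ 2.
Proof.
move=> [df [dD _]] hG.
have dg (s : R) :
    is_derive s 1 (fun r : R => f (w + r *: u)) (dotv u (gradv f (w + s *: u))).
  by rewrite -derive_dotv_gradv //; apply: is_derive_line; exact: diff_derivable.
have := taylor2_sqr_le dg (fun s => is_derive_line_dotv_gradv (fun l => dD l _))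
  (fun s => hessmx_quadform_le u (hG _)).
by rewrite /= scale0r scale1r addr0.
Qed.

Lemma sqnorm_taylor_residual_le d c (h : 'cV[R]_d -> 'cV[R]_c) (G : R) w u :
  (forall j, C2 (coordf h j)) -> (forall j x, opnorm_le (hessmx (coordf h j) x) G) ->
  sqnorm (h (w + u) - h w - jacmx h w *m u) <= c%:R * (G * sqnorm u / 2) ^+ 2.
Proof.
move=> hC2 hG.
have coord_le j : ((h (w + u) - h w - jacmx h w *m u) j 0) ^+ 2 <= (G * sqnorm u / 2) ^+ 2.
  have -> : (h (w + u) - h w - jacmx h w *m u) j 0
      = coordf h j (w + u) - coordf h j w - dotv u (gradv (coordf h j) w).
    rewrite !mxE /dotv; congr (_ - _ - _); apply: eq_bigr => l _.
    by rewrite !mxE mulrC.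
  exact: C2_taylor_sqr_le.
apply: le_trans (ler_sum _ (fun j _ => coord_le j)) _.
by rewrite sumr_const card_ord mulr_natl.
Qed.

Lemma dotvZl k (a : R) (p q : 'cV[R]_k) : dotv (a *: p) q = a * dotv p q.
Proof. by rewrite /dotv mulr_sumr; apply: eq_bigr => j _; rewrite mxE mulrA. Qed.

Lemma convex_gradv_le k (f : 'cV[R]_k -> R) x y : convex_fun f -> differentiable f x ->
  dotv (y - x) (gradv f x) <= f y - f x.
Proof.
move=> cf df; rewrite -derive_dotv_gradv //.
have dq : derivable f x (y - x) by apply: diff_derivable.
set q := fun s : R => s^-1 *: ((f \o shift x) (s *: (y - x)) - f x).
have q_cvg : q @ 0^'+ --> 'D_(y - x) f x.
  move=> A /dq /nbhs_ballP [_ /posnumP[e] xe_A].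
  by exists e%:num => //= z xe_z /gt_eqF/negbT/xe_A; exact.
apply: (cvgr_to_le q_cvg); near=> s.
have s0 : 0 < s by near: s; exact: nbhs_right_gt.
have s1 : s < 1 by near: s; exact: nbhs_right_lt.
have := cf y x s; rewrite (ltW s0) (ltW s1) => /(_ isT).
have -> : s *: y + (1 - s) *: x = s *: (y - x) + x.
  by rewrite scalerBr scalerBl scale1r -addrA [- _ + x]addrC.
rewrite /q /= -[s^-1 *: _]/(s^-1 * _) ler_pdivrMl // mulrBr mulrBl mul1r.
lra.
Unshelve. all: by end_near.
Qed.

(* The one-dimensional descent lemma: the derivative of
   [s |-> f (x + s u) - s <u, grad f x> - L s^2 |u|^2 / 2] is nonpositive on [0, 1]. *)
Lemma L_smooth_descent k (f : 'cV[R]_k -> R) (L : R) x u : L_smooth L f ->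
  f (x + u) <= f x + dotv u (gradv f x) + L / 2 * sqnorm u.
Proof.
move=> [df lip].
pose Q r := - dotv u (gradv f x) * r + - (L / 2 * sqnorm u) * (r * r).
have dpsi (r : R) : is_derive r 1 ((fun r => f (x + r *: u)) + Q)
    (dotv u (gradv f (x + r *: u)) + (- dotv u (gradv f x) + 2 * - (L / 2 * sqnorm u) * r)).
  apply: is_deriveD (is_derive_affine_sqr _ _ r).
  by rewrite -derive_dotv_gradv //; apply: is_derive_line; exact: diff_derivable.
have dpsi_le r : 0 < r < 1 ->
    dotv u (gradv f (x + r *: u)) + (- dotv u (gradv f x) + 2 * - (L / 2 * sqnorm u) * r) <= 0.
  case/andP=> r0 _.
  have grad_lip := lip (x + r *: u) x.
  rewrite addrAC subrr add0r (enormZ _ (ltW r0)) in grad_lip.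
  have := dotv_le_enormM u (gradv f (x + r *: u) - gradv f x).
  rewrite dotvB => /le_trans /(_ (ler_wpM2l (sqrtr_ge0 _) grad_lip)).
  have -> : enorm u * (L * (r * enorm u)) = L * r * sqnorm u by rewrite -enorm_sqr; ring.
  lra.
have := nonpos_derive_le ler01 dpsi dpsi_le.
by rewrite !addrfctE /Q /= scale0r scale1r addr0; lra.
Qed.

Lemma L_smooth_sqnorm_gradv_le k (f : 'cV[R]_k -> R) (L m : R) x : 0 < L -> L_smooth L f ->
  (forall y, m <= f y) -> sqnorm (gradv f x) <= 2 * L * (f x - m).
Proof.
move=> L0 fL fm.
have := L_smooth_descent x (- (L^-1 *: gradv f x)) fL.
rewrite sqnormN sqnormZ dotvNl dotvZl -sqnorm_dotv.
have := fm (x + - (L^-1 *: gradv f x)).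
set S := sqnorm (gradv f x) => m_le descent.
have -> : S = 2 * L * (L^-1 * S - L / 2 * (L^-1 ^+ 2 * S)) by field; rewrite gt_eqF.
by apply: ler_wpM2l; [rewrite mulr_ge0 ?ltW | lra].
Qed.

Lemma Phi_ge0 n d c (eta : R) (alpha : 'I_n -> R) (H : 'I_n -> 'M[R]_(c, d)) g v :
  0 <= Phi eta alpha H g v.
Proof.
rewrite /Phi mulr_ge0 ?invr_ge0 ?mulr_ge0 ?ler0n //.
by apply: sumr_ge0 => i _; exact: sqnorm_ge0.
Qed.

Lemma Psi_argmin_sqnorm_le n d c (eps eta V : R) (alpha : 'I_n -> R)
    (H : 'I_n -> 'M[R]_(c, d)) g (v vh : 'cV[R]_d) :
  0 < eps -> sqnorm vh <= V -> Phi eta alpha H g vh <= eps ^+ 2 ->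
  Psi eps eta alpha H g v <= Psi eps eta alpha H g vh -> sqnorm v <= V + 2.
Proof.
move=> eps0 vhV vhPhi Psi_le.
have e2 : 0 < eps ^+ 2 / 2 by rewrite divr_gt0 ?exprn_gt0.
have Phi0 := Phi_ge0 eta alpha H g v; have vhV' := ler_wpM2l (ltW e2) vhV.
rewrite /Psi in Psi_le; rewrite -(ler_pM2l e2); lra.
Qed.

Lemma young_step_le (eps p a g e r : R) : 0 < eps ->
  (p - a * g - e + r) ^+ 2 <= (1 + eps) * p ^+ 2 - 2 * a * (p * g) + 3 * (a ^+ 2 * g ^+ 2)
     + (3 * eps + 2) / eps * (e ^+ 2 + r ^+ 2).
Proof.
move=> eps0; rewrite -subr_ge0.
have -> : (1 + eps) * p ^+ 2 - 2 * a * (p * g) + 3 * (a ^+ 2 * g ^+ 2)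
     + (3 * eps + 2) / eps * (e ^+ 2 + r ^+ 2) - (p - a * g - e + r) ^+ 2
  = (eps * p + (e - r)) ^+ 2 / eps + (2 * a * g - (e - r)) ^+ 2 / 2
    + (1 / eps + 3 / 2) * (e + r) ^+ 2.
  by field; rewrite gt_eqF.
have eps_inv0 : 0 <= 1 / eps by rewrite divr_ge0 ?ltW.
by rewrite !addr_ge0 ?divr_ge0 ?sqr_ge0 ?(ltW eps0) // mulr_ge0 ?sqr_ge0 ?addr_ge0.
Qed.

Lemma sqnorm_young_step k (eps a : R) (p g e r : 'cV[R]_k) : 0 < eps ->
  sqnorm (p - a *: g - e + r) <= (1 + eps) * sqnorm p - 2 * a * dotv p g
    + 3 * (a ^+ 2 * sqnorm g) + (3 * eps + 2) / eps * (sqnorm e + sqnorm r).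
Proof.
move=> eps0; rewrite /sqnorm /dotv -big_split /= !mulr_sumr -sumrB -!big_split /=.
by apply: ler_sum => j _; rewrite !mxE; exact: young_step_le.
Qed.

Lemma descent_term_le (L alpha a S f PG : R) : 0 < L -> 0 < a -> a <= alpha / L ->
  S <= 2 * L * f -> f <= PG -> 0 <= S ->
  - 2 * a * PG + 3 * (a ^+ 2 * S) <= - 2 * (1 - 3 * alpha) * a * f.
Proof.
move=> L0 a0 aL Sf fPG S0.
have aS : a * S <= 2 * alpha * f.
  apply: le_trans (ler_wpM2r S0 aL) _.
  have -> : 2 * alpha * f = alpha / L * (2 * L * f) by field; rewrite gt_eqF.
  by rewrite ler_wpM2l // ltW // (lt_le_trans a0 aL).
have afPG : a * f <= a * PG by rewrite ler_pM2l.
have aaS : a * (a * S) <= a * (2 * alpha * f) by rewrite ler_pM2l.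
lra.
Qed.

Lemma taylor_term_le (eps eta D G V C s r : R) : 0 < eps -> 0 <= G -> 0 <= C ->
  eta ^+ 2 = D ^+ 2 * eps -> 0 <= s <= V + 2 -> r <= C * (G * (eta ^+ 2 * s) / 2) ^+ 2 ->
  (3 * eps + 2) / eps * r <= (3 * eps + 2) / 4 * C * (4 + (V + 2) * G * D ^+ 2) ^+ 2 * eps.
Proof.
move=> eps0 G0 C0 eta2 /andP[s0 sV]; rewrite eta2 => r_le.
set X := (V + 2) * G * D ^+ 2.
have X0 : 0 <= X.
  by rewrite /X mulr_ge0 ?sqr_ge0 // mulr_ge0 //; exact: le_trans s0 sV.
have GDe0 : 0 <= G * (D ^+ 2 * eps) by rewrite mulr_ge0 // mulr_ge0 ?sqr_ge0 ?(ltW eps0).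
have B0 : 0 <= G * (D ^+ 2 * eps * s) / 2 by rewrite divr_ge0 // mulrA mulr_ge0.
have BX : G * (D ^+ 2 * eps * s) / 2 <= X * eps / 2.
  have := ler_wpM2l GDe0 sV; rewrite /X; lra.
have K0 : 0 <= (3 * eps + 2) / eps by rewrite divr_ge0 ?(ltW eps0) //; lra.
apply: (le_trans (ler_wpM2l K0 r_le)).
apply: (@le_trans _ _ ((3 * eps + 2) / eps * (C * (X * eps / 2) ^+ 2))).
  by rewrite ler_wpM2l // ler_wpM2l // !expr2 ler_pM.
have -> : (3 * eps + 2) / eps * (C * (X * eps / 2) ^+ 2)
    = (3 * eps + 2) / 4 * C * X ^+ 2 * eps by field; rewrite gt_eqF.
rewrite ler_pM2r //; apply: ler_wpM2l.
  by rewrite mulr_ge0 // divr_ge0 //; lra.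
by rewrite !expr2 ler_pM //; lra.
Qed.

End OneStepBound.

Theorem mainTheorem12 (R : realType) (n c d T : nat)
  (h : 'I_n -> 'cV[R]_d -> 'cV[R]_c) (phi : 'I_n -> 'cV[R]_c -> R)
  (hstar : 'I_n -> 'cV[R]_c) (Lphi G V eps D alpha : R)
  (eta : nat -> R) (alph : nat -> 'I_n -> R)
  (w : nat -> 'cV[R]_d) (vreg : nat -> 'cV[R]_d) :
  (0 < n)%N -> (0 < c)%N -> (0 < d)%N ->
  (* minimizers of phi_i *)
  (forall i x, phi i (hstar i) <= phi i x) ->
  (* Assumption A *)
  0 < Lphi ->
  (forall i, convex_fun (phi i) /\ bounded_below (phi i) /\ L_smooth Lphi (phi i)) ->
  (* Assumption B *)
  0 < G ->
  (forall i (j : 'I_c), C2 (coordf (h i) j)) ->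
  (forall i (j : 'I_c) x, opnorm_le (hessmx (coordf (h i) j) x) G) ->
  (* iteration setup *)
  0 < eps -> 0 < D ->
  (forall t, eta t = D * Num.sqrt eps) ->
  (forall t i, 0 < alph t i) ->
  (* Algorithm 1: vreg t is the (unique) minimizer of Psi^{(t)} *)
  (forall t, (t < T)%N -> forall u : 'cV[R]_d,
     Psi eps (eta t) (alph t) (fun i => jacmx (h i) (w t))
         (fun i => gradv (phi i) (h i (w t))) (vreg t)
     <= Psi eps (eta t) (alph t) (fun i => jacmx (h i) (w t))
         (fun i => gradv (phi i) (h i (w t))) u) ->
  (forall t, (t < T)%N -> w t.+1 = w t - eta t *: vreg t) ->
  (* Assumption C *)
  0 < V ->
  (forall t, (t < T)%N -> exists vhat : 'cV[R]_d,
     sqnorm vhat <= V /\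
     Phi (eta t) (alph t) (fun i => jacmx (h i) (w t))
         (fun i => gradv (phi i) (h i (w t))) vhat <= eps ^+ 2) ->
  (* step sizes *)
  0 < alpha -> alpha < 3^-1 ->
  (forall t i, (t < T)%N -> alph t i <= alpha / Lphi) ->
  forall (i : 'I_n) (t : nat), (t < T)%N ->
    sqnorm (h i (w t.+1) - hstar i)
    <= (1 + eps) * sqnorm (h i (w t) - hstar i)
       - 2 * (1 - 3 * alpha) * alph t i * (phi i (h i (w t)) - phi i (hstar i))
       + (3 * eps + 2) / 4 * c%:R * (4 + (V + 2) * G * D ^+ 2) ^+ 2 * eps
       + (3 * eps + 2) / eps
         * sqnorm (eta t *: (jacmx (h i) (w t) *m vreg t)
                   - alph t i *: gradv (phi i) (h i (w t))).
Proof.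
move=> _ _ _ hmin Lphi0 hA G0 hC2 hH eps0 _ heta alph0 hPsi hw _ hC _ _ alph_le i t tT.
have [cvx [_ smooth]] := hA i.
set x := h i (w t); set g := gradv (phi i) x; set a := alph t i.
set J := jacmx (h i) (w t); set v := vreg t.
have v_le : 0 <= sqnorm v <= V + 2.
  have [vh [vhV vhPhi]] := hC t tT.
  by rewrite sqnorm_ge0; exact: Psi_argmin_sqnorm_le eps0 vhV vhPhi (hPsi t tT vh).
have -> : h i (w t.+1) - hstar i = x - hstar i - a *: g - (eta t *: (J *m v) - a *: g)
    + (h i (w t + - (eta t *: v)) - x - J *m - (eta t *: v)).
  by rewrite hw // mulmxN scalemxAr; apply/matrixP => j l; rewrite !mxE; ring.
apply: le_trans (sqnorm_young_step _ _ _ _ _ eps0) _.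
have conv : phi i x - phi i (hstar i) <= dotv (x - hstar i) g.
  by have := convex_gradv_le (hstar i) cvx (smooth.1 x); rewrite -opprB dotvNl; lra.
have desc := descent_term_le Lphi0 (alph0 t i) (alph_le t i tT)
  (L_smooth_sqnorm_gradv_le x Lphi0 smooth (hmin i)) conv (sqnorm_ge0 g).
have eta2 : eta t ^+ 2 = D ^+ 2 * eps by rewrite heta exprMn sqr_sqrtr ?ltW.
have res := sqnorm_taylor_residual_le (w t) (- (eta t *: v)) (hC2 i) (hH i).
rewrite sqnormN sqnormZ -/x -/J in res.
have := taylor_term_le eps0 (ltW G0) (ler0n _ c) eta2 v_le res.
rewrite -/a -/g in desc; lra.
Qed.
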